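(* Let $(\Omega,\mathcal{F},\mathbb{P})$ be a probability space and let $X,Y$ be real-valued random variables with $\mathbb{E}[|X|]<\infty$ and $\mathbb{E}[|Y|]<\infty$. For such a random variable $Z$ define the mean absolute deviation $\mathrm{MAD}(Z):=\mathbb{E}\big[|Z-\mathbb{E}[Z]|\big]$. Then $$\mathrm{MAD}(X+Y)=\mathrm{MAD}(X)+\mathrm{MAD}(Y)$$ if and only if $$(X-\mathbb{E}[X])(Y-\mathbb{E}[Y])\geq 0 \quad \mathbb{P}\text{-almost surely}.$$ *)

From HB Require Import structures.
From mathcomp Require Import all_boot all_order all_algebra.
From mathcomp Require Import all_classical all_reals all_analysis.
Set Implicit Arguments. Unset Strict Implicit. Unset Printing Implicit Defensive.
Import Order.TTheory GRing.Theory Num.Theory.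
Local Open Scope ring_scope.
Local Open Scope ereal_scope.

(* Mean absolute deviation MAD(Z) := E[ |Z - E[Z]| ].  For integrable Z,
   E[Z] is a finite extended real, so [fine] recovers the real mean. *)
Definition MAD d (T : measurableType d) (R : realType) (P : probability T R)
  (Z : T -> R) : \bar R :=
  'E_P[fun w => `|Z w - fine 'E_P[Z]|%R].

(* With a := X - E[X] and b := Y - E[Y], linearity of expectation gives
   MAD(X + Y) = E|a + b| while MAD(X) + MAD(Y) = E(|a| + |b|).  The triangle
   inequality |a + b| <= |a| + |b| is an equality exactly when a b >= 0, and
   two pointwise ordered integrable functions have the same integral iff they
   agree almost everywhere. *)
From HB Require Import structures.
From mathcomp Require Import all_boot all_order all_algebra.
From mathcomp Require Import all_classical all_reals all_analysis.
Import Order.TTheory GRing.Theory Num.Theory.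
Local Open Scope classical_set_scope.
Local Open Scope ring_scope.

Lemma normD_eq_sum (R : realDomainType) (a b : R) :
  (`|a + b| == `|a| + `|b|) = (0 <= a * b).
Proof.
(* (|a| + |b|)^2 - |a + b|^2 = 2 (|a b| - a b) *)
rewrite -(eqrXn2 (n := 2)) ?addr_ge0 // sqrrD !real_normK ?num_real //.
rewrite sqrrD -normrM -!addrA (inj_eq (addrI _)) !addrA (inj_eq (addIr _)).
by rewrite -!mulr2n eqr_pMn2r // eq_sym ger0_def.
Qed.

Section integrable_real.
Context {d} {T : measurableType d} {R : realType} {D : set T}.
Variable mD : measurable D.

Lemma integrableD_EFin {mu : {measure set T -> \bar R}} {f g : T -> R} :
  mu.-integrable D (EFin \o f) -> mu.-integrable D (EFin \o g) ->
  mu.-integrable D (EFin \o (f \+ g)).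
Proof.
by move=> if_ ig; apply: eq_integrable (integrableD mD if_ ig) => // x _.
Qed.

Lemma integrable_normr_subr_cst {mu : {finite_measure set T -> \bar R}}
    {f : T -> R} (c : R) :
  mu.-integrable D (EFin \o f) ->
  mu.-integrable D (EFin \o (fun x => `|f x - c|)).
Proof.
move=> if_; apply: (integrable_norm (f := fun x => f x - c)).
have := integrableB mD if_ (finite_measure_integrable_cst mu c mD).
by apply: eq_integrable => // x _.
Qed.

Lemma le_integral_eq_ae (mu : {measure set T -> \bar R}) (f g : T -> R) :
  mu.-integrable D (EFin \o f) -> mu.-integrable D (EFin \o g) ->
  (forall x, D x -> f x <= g x) ->
  (\int[mu]_(x in D) (f x)%:E = \int[mu]_(x in D) (g x)%:E)%E <->
  f = g %[ae mu in D].
Proof.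
move=> if_ ig le_fg.
have igf := integrableB mD ig if_.
have gfin := integrable_fin_num mD ig.
transitivity (\int[mu]_(x in D) ((g x)%:E - (f x)%:E) = 0)%E.
  rewrite integralB_EFin //; split => [->|/eqP]; first exact: subee.
  by rewrite sube_eq ?fin_num_adde_defr // add0e => /eqP.
rewrite (eq_integral (fun x => `|(g x)%:E - (f x)%:E|)%E); last first.
  by move=> x /[!inE] Dx; rewrite gee0_abs // -EFinB lee_fin subr_ge0 le_fg.
rewrite ae_eq_integral_abs //; last exact: measurable_int igf.
split; apply: filterS => x + Dx => /(_ Dx) /=.
  by rewrite -EFinB => -[/eqP]; rewrite subr_eq0 => /eqP.
by move=> ->; rewrite subee.
Qed.

End integrable_real.

Lemma fine_expectationD {d} {T : measurableType d} {R : realType}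
    {P : probability T R} {X Y : T -> R} :
  P.-integrable [set: T] (EFin \o X) -> P.-integrable [set: T] (EFin \o Y) ->
  fine 'E_P[X \+ Y] = fine 'E_P[X] + fine 'E_P[Y].
Proof.
move=> /Lfun1_integrable iX /Lfun1_integrable iY.
by rewrite expectationD // fineD // expectation_fin_num.
Qed.

Theorem theorem1 (d : measure_display) (T : measurableType d) (R : realType)
  (P : probability T R) (X Y : {RV P >-> R})
  (hX : P.-integrable [set: T] (EFin \o X))
  (hY : P.-integrable [set: T] (EFin \o Y)) :
  MAD P (X \+ Y) = (MAD P X + MAD P Y)%E <->
  {ae P, forall w, 0 <= (X w - fine 'E_P[X]) * (Y w - fine 'E_P[Y])}.
Proof.
rewrite /MAD (fine_expectationD hX hY).
set mX := fine 'E_P[X]; set mY := fine 'E_P[Y].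
have centerD w : X w + Y w - (mX + mY) = (X w - mX) + (Y w - mY).
  by rewrite opprD addrACA.
have iX := integrable_normr_subr_cst measurableT mX hX.
have iY := integrable_normr_subr_cst measurableT mY hY.
have iXY := integrable_normr_subr_cst measurableT (mX + mY)
  (integrableD_EFin measurableT hX hY).
rewrite -expectationD ?Lfun1_integrable // unlock.
rewrite le_integral_eq_ae //=; last 2 first.
- exact: integrableD_EFin.
- by move=> w _; rewrite centerD ler_normD.
split; apply: filterS => w /=; rewrite centerD -normD_eq_sum.
  by move=> /(_ I) /eqP.
by move=> /eqP.
Qed.
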